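(* Let $\mathbb{F}\in\{\mathbb{R},\mathbb{C}\}$, let $A_1,A_2,\ldots$ be a sequence of matrices in $\mathbb{F}^{n\times n}$, and let $\mu$ be a matrix norm on $\mathbb{F}^{n\times n}$. Suppose that $\sum_{i=1}^\infty(\max(\mu(A_i),1)-1)$ converges and that $\sum_{i=1}^\infty(1-\min(\mu(A_i),1))$ diverges. Then all general products from $A_1,A_2,\ldots$ converge to $0$: for every permutation $\sigma$ of the positive integers, every integer $p\ge0$, and every sequence $(C_{p,r})_{r\ge1}$ of general products as defined below, $\lim_{r\to\infty}C_{p,r}=0$.
   Context: A matrix norm is a submultiplicative norm on $\mathbb{F}^{n\times n}$. General products: given a permutation $\sigma$ of the positive integers, set $B_i=A_{\sigma(i)}$; for an integer $p\ge0$ and each $r\ge1$, $C_{p,r}$ is a product of the matrices $B_{p+1},\ldots,B_{p+r}$, each used exactly once, taken in some order (the order may be chosen arbitrarily and independently for each $r$). *)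

From HB Require Import structures.
From mathcomp Require Import all_boot all_order all_algebra all_fingroup.
From mathcomp Require Import all_classical all_reals all_analysis.
From mathcomp Require Import complex.
Set Implicit Arguments. Unset Strict Implicit. Unset Printing Implicit Defensive.
Import Order.TTheory GRing.Theory Num.Theory.
Import numFieldNormedType.Exports.
Local Open Scope ring_scope.
Local Open Scope classical_set_scope.

(* A matrix norm: a submultiplicative norm on F^{n x n}.  Its values are
   taken in F itself (they are nonnegative, hence real). *)
Definition matrix_norm (F : numFieldType) (n : nat) (mu : 'M[F]_n -> F) : Prop :=
  [/\ (forall A, 0 <= mu A),
      (forall A, mu A = 0 -> A = 0),
      (forall (c : F) A, mu (c *: A) = `|c| * mu A),
      (forall A B, mu (A + B) <= mu A + mu B)
    & (forall A B, mu (A *m B) <= mu A * mu B)].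

Definition mxprod (F : numFieldType) (n r : nat) (M : 'I_r -> 'M[F]_n) : 'M[F]_n :=
  \big[@mulmx F n n n / 1%:M]_(i < r) M i.

(* Sequences are 0-indexed: A 0 is the paper's A_1, sigma is a permutation
   of nat, B i = A (sigma i) is the paper's B_{i+1}, and for r >= 1,
   C r is a product of B p, ..., B (p + r - 1) (the paper's B_{p+1..p+r}),
   each used exactly once, in the order given by a permutation s of 'I_r. *)
Definition theorem3p2_prop (F : numFieldType) : Prop :=
  forall (n : nat) (A : nat -> 'M[F]_n) (mu : 'M[F]_n -> F),
    matrix_norm mu ->
    cvg (series (fun i => Num.max (mu (A i)) 1 - 1) @ \oo) ->
    ~ cvg (series (fun i => 1 - Num.min (mu (A i)) 1) @ \oo) ->
    forall (sigma : nat -> nat), bijective sigma ->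
    forall (p : nat) (C : nat -> 'M[F]_n),
      (forall r : nat, (0 < r)%N ->
         exists s : 'S_r, C r = mxprod (fun i : 'I_r => A (sigma (p + s i)%N))) ->
      C @ \oo --> (0 : 'M[F]_n).

From HB Require Import structures.
From mathcomp Require Import all_boot all_order all_algebra all_fingroup.
From mathcomp Require Import all_classical all_reals all_analysis.
From mathcomp Require Import complex ring.
Set Implicit Arguments. Unset Strict Implicit. Unset Printing Implicit Defensive.
Import Order.TTheory GRing.Theory Num.Theory.
Import numFieldNormedType.Exports.
Local Open Scope ring_scope.
Local Open Scope classical_set_scope.

(* Split mu(A_j) = (1 + a_j) (1 - b_j) with a_j = max(mu(A_j), 1) - 1 and
   b_j = 1 - min(mu(A_j), 1).  By submultiplicativity, mu(C_{p,r}) is at most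
   the product of these factors over the indices of B_{p+1}, ..., B_{p+r}.
   The factors 1 + a_j have bounded products over all finite index sets,
   since prod (1 + a) (1 - sum a) <= 1 and the tails of sum a are small.
   The factors 1 - b_j have product at most 1 / (1 + sum b), and sum b over
   the indices of B_{p+1}, ..., B_{p+r} is unbounded in r because sigma is a
   bijection and sum b diverges.  Hence mu(C_{p,r}) -> 0, and the entrywise
   norm is dominated by mu. *)

Section ProductInequalities.
Variables (F : numDomainType) (I : Type).
Implicit Types (s : seq I) (x : I -> F).

Lemma prod1D_sum_le1 s x : (forall j, 0 <= x j) ->
  (\prod_(j <- s) (1 + x j)) * (1 - \sum_(j <- s) x j) <= 1.
Proof.
move=> x_ge0; elim: s => [|k s IH]; first by rewrite !big_nil subr0 mulr1.
rewrite !big_cons.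
set P := \prod_(j <- s) _ in IH *; set T := \sum_(j <- s) _ in IH *.
have P_ge0 : 0 <= P by apply: prodr_ge0 => j _; rewrite addr_ge0.
have T_ge0 : 0 <= T by apply: sumr_ge0.
have -> : (1 + x k) * P * (1 - (x k + T)) = P * (1 - T) - P * x k * (x k + T).
  by ring.
by rewrite lerBlDr (le_trans IH) // lerDl !mulr_ge0 // addr_ge0.
Qed.

Lemma prod1B_sum_le1 s x : (forall j, 0 <= x j <= 1) ->
  (\prod_(j <- s) (1 - x j)) * (1 + \sum_(j <- s) x j) <= 1.
Proof.
move=> x01; have x_ge0 j : 0 <= x j by case/andP: (x01 j).
elim: s => [|k s IH]; first by rewrite !big_nil addr0 mulr1.
rewrite !big_cons.
set P := \prod_(j <- s) _ in IH *; set T := \sum_(j <- s) _ in IH *.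
have P_ge0 : 0 <= P by apply: prodr_ge0 => j _; rewrite subr_ge0; case/andP: (x01 j).
have T_ge0 : 0 <= T by apply: sumr_ge0.
have -> : (1 - x k) * P * (1 + (x k + T)) = P * (1 + T) - P * x k * (x k + T).
  by ring.
by rewrite lerBlDr (le_trans IH) // lerDl !mulr_ge0 // addr_ge0.
Qed.

End ProductInequalities.

Section UniqSubset.
Variables (I : eqType) (s t : seq I).
Hypotheses (s_uniq : uniq s) (t_uniq : uniq t) (sub_st : {subset s <= t}).

Lemma big_uniq_subset (R : Type) (idx : R) (op : Monoid.com_law idx) (g : I -> R) :
  \big[op/idx]_(j <- t) g j =
  op (\big[op/idx]_(j <- s) g j) (\big[op/idx]_(j <- t | j \notin s) g j).
Proof.
rewrite (bigID (mem s)) /= -big_filter; congr (op _ _); apply: perm_big.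
apply: uniq_perm; rewrite ?filter_uniq // => j.
by rewrite mem_filter andb_idr //; apply: sub_st.
Qed.

Lemma ler_sum_uniq_subset (F : numDomainType) (g : I -> F) :
  (forall j, 0 <= g j) -> \sum_(j <- s) g j <= \sum_(j <- t) g j.
Proof. by move=> g_ge0; rewrite (@big_uniq_subset _ _ +%R) lerDl sumr_ge0. Qed.

Lemma ler_prod_uniq_subset (F : numDomainType) (g : I -> F) :
  (forall j, 1 <= g j) -> \prod_(j <- s) g j <= \prod_(j <- t) g j.
Proof.
move=> g_ge1; have g_ge0 j : 0 <= g j by apply: le_trans (g_ge1 j).
rewrite (@big_uniq_subset _ _ *%R) ler_peMr ?prodr_ge0 //.
by apply: (big_ind (fun v => 1 <= v)) => // u v; apply: mulr_ege1.
Qed.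

End UniqSubset.

Lemma delta_mul_mx_delta (R : pzRingType) m n p q (X : 'M[R]_(n, p))
    (i : 'I_m) (k : 'I_n) (l : 'I_p) (j : 'I_q) :
  delta_mx i k *m X *m delta_mx l j = X k l *: delta_mx i j.
Proof.
apply/matrixP => x y; rewrite !mxE (bigD1 l) //= big1 ?addr0; last first.
  by move=> l' /negPf nl; rewrite !mxE nl /= mulr0.
rewrite !mxE (bigD1 k) //= big1 ?addr0; last first.
  by move=> k' /negPf nk; rewrite !mxE nk andbF mul0r.
rewrite !mxE !eqxx !andbT.
by case: (x == i); case: (y == j); rewrite /= ?mulr1 ?mul1r ?mulr0 ?mul0r.
Qed.

Definition window (sigma : nat -> nat) (p r : nat) : seq nat :=
  [seq sigma i | i <- iota p r].

Lemma window_uniq sigma p r : injective sigma -> uniq (window sigma p r).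
Proof. by move=> sigma_inj; rewrite map_inj_uniq ?iota_uniq. Qed.

Section MatrixNorm.
Variables (F : numFieldType) (n : nat) (mu : 'M[F]_n -> F).
Hypothesis mu_norm : matrix_norm mu.

Lemma matrix_norm_mxprod_le r (M : 'I_r.+1 -> 'M[F]_n) :
  mu (mxprod M) <= \prod_(i < r.+1) mu (M i).
Proof.
case: mu_norm => mu_ge0 _ _ _ muM; rewrite /mxprod.
elim: r M => [|r IH] M; first by rewrite !big_ord_recl !big_ord0 mulmx1 mulr1.
rewrite [X in mu X]big_ord_recl [leRHS]big_ord_recl.
by apply: le_trans (muM _ _) _; apply: ler_wpM2l => //; apply: IH.
Qed.

(* Sandwiching X between matrix units isolates one entry:
   |X i j| mu(E_ij) <= mu(E_ii) mu(X) mu(E_jj). *)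
Lemma normr_le_matrix_norm : exists2 K, 0 <= K & forall X : 'M[F]_n, `|X| <= K * mu X.
Proof.
case: mu_norm => mu_ge0 mu_eq0 muZ _ muM.
pose K (ij : 'I_n * 'I_n) :=
  mu (delta_mx ij.1 ij.1) * mu (delta_mx ij.2 ij.2) / mu (delta_mx ij.1 ij.2).
have K_ge0 ij : 0 <= K ij by rewrite !mulr_ge0 // invr_ge0.
exists (\sum_ij K ij) => [|X]; first exact: sumr_ge0.
rewrite -[`|X|]/(mx_norm X).
have [->|/mx_norm_neq0 [ij ->]] := eqVneq (mx_norm X) 0.
  by rewrite mulr_ge0 ?sumr_ge0.
have mu_delta_gt0 : 0 < mu (delta_mx ij.1 ij.2).
  rewrite lt_def mu_ge0 andbT; apply/eqP => /mu_eq0 /matrixP /(_ ij.1 ij.2).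
  by rewrite !mxE !eqxx => /eqP; rewrite oner_eq0.
have : `|X ij.1 ij.2| * mu (delta_mx ij.1 ij.2) <=
       mu (delta_mx ij.1 ij.1) * mu X * mu (delta_mx ij.2 ij.2).
  rewrite -muZ -delta_mul_mx_delta; apply: le_trans (muM _ _) _.
  by apply: ler_wpM2r => //; apply: muM.
rewrite -ler_pdivlMr // => /le_trans; apply.
rewrite [leLHS](_ : _ = K ij * mu X); last by rewrite /K; ring.
by apply: ler_wpM2r => //; rewrite (bigD1 ij) //= lerDl sumr_ge0.
Qed.

Lemma matrix_norm_perm_prod_le (A : nat -> 'M[F]_n) sigma p r (s : 'S_r) :
  (0 < r)%N ->
  mu (mxprod (fun i : 'I_r => A (sigma (p + s i)%N))) <=
  \prod_(j <- window sigma p r) mu (A j).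
Proof.
case: r s => // r s _; apply: le_trans (matrix_norm_mxprod_le _) _.
have -> : window sigma p r.+1 = map (sigma \o addn p) (index_iota 0 r.+1).
  by rewrite /window map_comp /index_iota subn0 -iotaDl addn0.
by rewrite big_map big_mkord [leRHS](reindex_inj (@perm_inj _ s)).
Qed.

End MatrixNorm.

(* The only completeness property of the scalar field that the argument uses. *)
Definition nneg_series_complete (F : numFieldType) : Prop :=
  forall u : nat -> F, (forall i, 0 <= u i) ->
  (exists B, forall N, series u N <= B) -> cvg (series u @ \oo).

Section NonnegativeSeries.
Variable F : numFieldType.
Implicit Types (a b : nat -> F) (sigma : nat -> nat).

Lemma cvg_series_tail_lt a : cvg (series a @ \oo) -> forall e, 0 < e ->
  exists N, forall M, (N <= M)%N -> `|\sum_(N <= j < M) a j| < e.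
Proof.
move=> /cvg_cauchy/cauchy_seriesP a_cauchy e /a_cauchy [[P Q] [[N1 _ PN1] [N2 _ QN2]] PQ].
exists (maxn N1 N2) => M leM; apply: (PQ (maxn N1 N2, M)); split=> /=.
  exact/PN1/leq_maxl.
apply: QN2; exact: leq_trans (leq_maxr _ _) leM.
Qed.

Lemma prod1D_uniq_bounded a : (forall j, 0 <= a j) -> cvg (series a @ \oo) ->
  exists K, forall s, uniq s -> \prod_(j <- s) (1 + a j) <= K.
Proof.
move=> a_ge0 /cvg_series_tail_lt /(_ 2^-1) [|N0 tail_lt]; first by rewrite invr_gt0 ltr0n.
have prod_ge0 s : 0 <= \prod_(j <- s) (1 + a j) by rewrite prodr_ge0 // => j _; rewrite addr_ge0.
exists (2 * \prod_(0 <= j < N0) (1 + a j)) => s s_uniq.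
pose M := maxn N0 (\max_(j <- s) j).+1.
have N0M : (N0 <= M)%N by rewrite leq_maxl.
have sub_sM : {subset s <= index_iota 0 M}.
  move=> j js; rewrite mem_index_iota (leq_trans _ (leq_maxr _ _)) //.
  by rewrite ltnS leq_bigmax_seq.
apply: le_trans (ler_prod_uniq_subset s_uniq (iota_uniq _ _) sub_sM _) _ => [j|].
  by rewrite lerDl.
rewrite (big_cat_nat (leq0n N0) N0M) /= mulrC ler_wpM2r //.
have tail_le : \sum_(N0 <= j < M) a j <= 2^-1.
  by rewrite -[leLHS]ger0_norm ?sumr_ge0 // ltW // tail_lt.
have := prod1D_sum_le1 (index_iota N0 M) a_ge0.
set P := \prod_(j <- _) _ => /(le_trans _) P_le.
rewrite -[2]mul1r -ler_pdivrMr ?ltr0n //.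
apply: P_le; apply: ler_wpM2l; first exact: prod_ge0.
have half : (1 : F) - 2^-1 = 2^-1 by field.
by rewrite -[leLHS]half lerB.
Qed.

Lemma nneg_series_unbounded b : nneg_series_complete F -> (forall j, 0 <= b j) ->
  ~ cvg (series b @ \oo) -> forall B, B \is Num.real -> exists N, B < series b N.
Proof.
move=> complete b_ge0 b_dvg B B_real; apply: contrapT => B_ub.
apply/b_dvg/complete => //; exists B => N.
have series_ge0 : 0 <= series b N by apply: sumr_ge0.
rewrite real_leNgt ?(ger0_real series_ge0) //.
by apply/negP => B_lt; apply: B_ub; exists N.
Qed.

Lemma window_sum_unbounded b sigma p : bijective sigma -> (forall j, 0 <= b j <= 1) ->
    (forall B, B \is Num.real -> exists N, B < series b N) ->
  forall B, B \is Num.real -> \forall r \near \oo, B < \sum_(j <- window sigma p r) b j.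
Proof.
move=> [tau sigmaK tauK] b01 b_unbdd B B_real.
have b_ge0 j : 0 <= b j by case/andP: (b01 j).
have [N BpN] := b_unbdd (B + p%:R) (realD B_real (realn _ p)).
exists (\max_(j <- iota 0 N) tau j).+1 => // r r_ge.
have sum_le_size s : \sum_(j <- s) b j <= (size s)%:R.
  elim: s => [|j s IH]; first by rewrite big_nil.
  by rewrite big_cons /= mulrS lerD //; case/andP: (b01 j).
have sub_N : {subset iota 0 N <= window sigma 0 (p + r)}.
  move=> j; rewrite mem_iota add0n => /andP[_ jN]; apply/mapP; exists (tau j) => //.
  rewrite mem_iota add0n (leq_trans _ (leq_addl p r)) // (leq_trans _ r_ge) // ltnS.
  by rewrite leq_bigmax_seq // mem_iota.
have : series b N <= p%:R + \sum_(j <- window sigma p r) b j.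
  rewrite /series /= /index_iota subn0.
  apply: le_trans (ler_sum_uniq_subset (iota_uniq _ _) _ sub_N b_ge0) _.
    by apply: window_uniq; apply: can_inj sigmaK.
  rewrite /window iotaD map_cat big_cat lerD2r /=.
  by apply: le_trans (sum_le_size _) _; rewrite size_map size_iota.
by rewrite -(ltrD2r p%:R) addrC => /(lt_le_trans BpN).
Qed.

Lemma window_prod1B_cvg0 b sigma p : bijective sigma -> (forall j, 0 <= b j <= 1) ->
    (forall B, B \is Num.real -> exists N, B < series b N) ->
  (fun r => \prod_(j <- window sigma p r) (1 - b j)) @ \oo --> 0.
Proof.
move=> sigma_bij b01 b_unbdd; apply/cvgr0Pnorm_le => e e_gt0.
have e_inv_real : e^-1 \is Num.real by rewrite realV gtr0_real.
near=> r.
have T_gt : e^-1 < \sum_(j <- window sigma p r) b j.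
  by near: r; apply: window_sum_unbounded.
set P := \prod_(j <- _) _.
have P_ge0 : 0 <= P by apply: prodr_ge0 => j _; rewrite subr_ge0; case/andP: (b01 j).
rewrite ger0_norm // -[e]mul1r -ler_pdivrMr //.
apply: le_trans (prod1B_sum_le1 _ b01); apply: ler_wpM2l => //.
by rewrite (le_trans (ltW T_gt)) // lerDr.
Unshelve. all: by end_near.
Qed.
End NonnegativeSeries.

Lemma norm_le_cvg0 {K : numFieldType} {V : normedModType K} {T : Type}
    {G : set_system T} {FG : Filter G} (f : T -> V) (g : T -> K) :
  (\forall t \near G, `|f t| <= g t) -> g @ G --> 0 -> f @ G --> 0.
Proof.
move=> f_le_g /cvgr0Pnorm_le g_cvg0; apply/cvgr0Pnorm_le => e e_gt0.
near=> t.
have fg : `|f t| <= g t by near: t.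
have ge : `|g t| <= e by near: t; apply: g_cvg0.
by rewrite (le_trans fg) // (le_trans _ ge) // ger0_norm // (le_trans _ fg).
Unshelve. all: by end_near.
Qed.

Lemma max1_min1_split (R : numDomainType) (x : R) : 0 <= x ->
  [/\ 0 <= Num.max x 1 - 1, 0 <= 1 - Num.min x 1 <= 1
    & x = (1 + (Num.max x 1 - 1)) * (1 - (1 - Num.min x 1))].
Proof.
move=> x_ge0; rewrite subrKC subKr.
case: (real_leP (ger0_real x_ge0) (real1 R)) => [x_le1|x_gt1].
  by rewrite subrr lexx subr_ge0 x_le1 lerBlDr lerDl x_ge0 mul1r.
by rewrite subrr lexx subr_ge0 ltW //= ler01 mulr1.
Qed.

Lemma general_products_cvg0 (F : numFieldType) :
  nneg_series_complete F -> theorem3p2_prop F.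
Proof.
move=> complete n A mu mu_norm a_cvg b_dvg sigma sigma_bij p C C_prod.
have mu_ge0 X : 0 <= mu X by case: mu_norm.
pose a j := Num.max (mu (A j)) 1 - 1.
pose b j := 1 - Num.min (mu (A j)) 1.
have [a_ge0 b01 mu_split] : [/\ forall j, 0 <= a j, forall j, 0 <= b j <= 1
    & forall j, mu (A j) = (1 + a j) * (1 - b j)].
  by split=> j; case: (max1_min1_split (mu_ge0 (A j))).
have b_ge0 j : 0 <= b j by case/andP: (b01 j).
have [K prodK] := prod1D_uniq_bounded a_ge0 a_cvg.
have [K' K'_ge0 normK'] := normr_le_matrix_norm mu_norm.
have b_unbdd := nneg_series_unbounded complete b_ge0 b_dvg.
pose P r := \prod_(j <- window sigma p r) (1 - b j).
have P_cvg0 : (cst (K' * K) \* P) @ \oo --> 0.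
  by rewrite -(mulr0 (K' * K)); apply: cvgM; [apply: cvg_cst | apply: window_prod1B_cvg0].
apply: norm_le_cvg0 P_cvg0.
near=> r.
have r_gt0 : (0 < r)%N by near: r; exists 1%N.
have [s ->] := C_prod r r_gt0.
rewrite /= -mulrA; apply: le_trans (normK' _) _; apply: ler_wpM2l => //.
apply: le_trans (matrix_norm_perm_prod_le mu_norm A sigma p s r_gt0) _.
rewrite (eq_bigr _ (fun j _ => mu_split j)) big_split /=.
apply: ler_wpM2r; first by apply: prodr_ge0 => j _; rewrite subr_ge0; case/andP: (b01 j).
by apply: prodK; apply/window_uniq/bij_inj.
Unshelve. all: by end_near.
Qed.

Lemma nneg_series_complete_real (R : realType) : nneg_series_complete R.
Proof.
move=> u u_ge0 [B u_le]; apply/cvg_ex; exists (sup (range (series u))).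
apply: nondecreasing_cvgn; first exact: nondecreasing_series.
by exists B => _ [N _ <-].
Qed.

Section ComplexNonnegativeSeries.
Local Open Scope complex_scope.
Variable R : realType.

Lemma normc_real (x : R) : `|x%:C| = `|x|%:C.
Proof. by rewrite normc_def /= expr0n addr0 sqrtr_sqr. Qed.

Lemma nneg_series_complete_complex : nneg_series_complete R[i].
Proof.
move=> u u_ge0 [B u_le].
pose v i := complex.Re (u i).
have uE i : u i = (v i)%:C by rewrite /v RRe_real // ger0_real.
have seriesE N : series u N = (series v N)%:C.
  by rewrite /series /= rmorph_sum; apply: eq_bigr => i _; apply: uE.
have v_cvg : cvg (series v @ \oo).
  apply: nneg_series_complete_real => [i|]; first by rewrite -ler0c -uE.
  by exists (complex.Re B) => N; move: (u_le N); rewrite seriesE lecE => /andP[].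
have [l v_l] := (cvg_ex _).1 v_cvg.
apply/cvg_ex; exists l%:C; apply/cvgrPdist_lt => e e_gt0.
have e_real : e = (complex.Re e)%:C by rewrite RRe_real // gtr0_real.
have Re_gt0 : 0 < complex.Re e by rewrite -ltcR -e_real.
near=> N; rewrite seriesE -rmorphB normc_real e_real ltcR.
by near: N; apply: cvgr_dist_lt.
Unshelve. all: by end_near.
Qed.

End ComplexNonnegativeSeries.

Theorem theorem3p2 :
  (forall R : realType, theorem3p2_prop R) /\
  (forall R : realType, theorem3p2_prop (complex R)).
Proof.
split=> R; apply: general_products_cvg0.
  exact: nneg_series_complete_real.
exact: nneg_series_complete_complex.
Qed.
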